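(* Let $R$ be a local ring and $x\in R$ a regular element. Then $x$ is a strong divisor of $R$ if and only if the extension $R\subseteq R_x$ is Prüfer.
   Context: All rings are commutative with identity; ''local'' means having a unique maximal ideal. A strong divisor of a local ring $R$ is a regular element $t\in R$ such that $Rt$ is comparable under inclusion with every ideal of $R$. An extension $A\subseteq B$ is Prüfer if $A\subseteq C$ is a flat epimorphism for each intermediate ring $C$. $R_x$ is the localization of $R$ at the powers of $x$ (which contains $R$ since $x$ is regular). *)

From mathcomp Require Import all_boot all_algebra.
Set Implicit Arguments. Unset Strict Implicit. Unset Printing Implicit Defensive.
Import GRing.Theory.
Local Open Scope ring_scope.

Definition is_ideal (R : comNzRingType) (I : R -> Prop) : Prop :=
  [/\ I 0, (forall a b, I a -> I b -> I (a + b)) & (forall r a, I a -> I (r * a))].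

Definition is_maximal_ideal (R : comNzRingType) (M : R -> Prop) : Prop :=
  [/\ is_ideal M, ~ M 1 &
      forall J : R -> Prop, is_ideal J -> (forall a, M a -> J a) ->
        (forall a, J a <-> M a) \/ J 1].

Definition local_ring (R : comNzRingType) : Prop :=
  exists M : R -> Prop, is_maximal_ideal M /\
    forall N : R -> Prop, is_maximal_ideal N -> forall a, N a <-> M a.

Definition regular (R : comNzRingType) (x : R) : Prop :=
  forall r : R, x * r = 0 -> r = 0.

Definition principal_ideal (R : comNzRingType) (t : R) : R -> Prop :=
  fun a => exists r, a = r * t.

Definition strong_divisor (R : comNzRingType) (t : R) : Prop :=
  regular t /\
  forall I : R -> Prop, is_ideal I ->
    (forall a, principal_ideal t a -> I a) \/ (forall a, I a -> principal_ideal t a).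

(* B (with the injective morphism phi) is the localization R_x of R at the
   powers of the regular element x: phi is injective, phi x is invertible, and
   every element of B has the form phi r / phi x ^ n. *)
Definition is_localization_at_powers (R B : comNzRingType)
    (phi : {rmorphism R -> B}) (x : R) : Prop :=
  [/\ injective phi,
      (exists y : B, phi x * y = 1) &
      forall b : B, exists r : R, exists n : nat, b * phi x ^+ n = phi r].

Definition intermediate_ring (R B : comNzRingType) (phi : {rmorphism R -> B})
    (C : B -> Prop) : Prop :=
  [/\ forall r, C (phi r),
      (forall a b, C a -> C b -> C (a - b)) &
      (forall a b, C a -> C b -> C (a * b))].

Definition rmorph_on (B D : comNzRingType) (C : B -> Prop) (f : B -> D) : Prop :=
  [/\ f 1 = 1,
      (forall a b, C a -> C b -> f (a + b) = f a + f b) &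
      (forall a b, C a -> C b -> f (a * b) = f a * f b)].

Definition epi_on (R B : comNzRingType) (phi : {rmorphism R -> B})
    (C : B -> Prop) : Prop :=
  forall (D : comNzRingType) (f g : B -> D),
    rmorph_on C f -> rmorph_on C g -> (forall r, f (phi r) = g (phi r)) ->
    forall c, C c -> f c = g c.

(* C is a flat R-module (R acting through phi), by the equational criterion
   of flatness. *)
Definition flat_on (R B : comNzRingType) (phi : {rmorphism R -> B})
    (C : B -> Prop) : Prop :=
  forall (n : nat) (a : 'I_n -> R) (c : 'I_n -> B),
    (forall i, C (c i)) -> \sum_(i < n) phi (a i) * c i = 0 ->
    exists m : nat, exists b : 'I_m -> B, exists A : 'I_n -> 'I_m -> R,
      [/\ forall j, C (b j),
          (forall i, c i = \sum_(j < m) phi (A i j) * b j) &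
          (forall j, \sum_(i < n) a i * A i j = 0)].

Definition flat_epimorphism_on (R B : comNzRingType) (phi : {rmorphism R -> B})
    (C : B -> Prop) : Prop :=
  flat_on phi C /\ epi_on phi C.

Definition prufer_extension (R B : comNzRingType) (phi : {rmorphism R -> B}) : Prop :=
  forall C : B -> Prop, intermediate_ring phi C -> flat_epimorphism_on phi C.

From mathcomp Require Import all_boot all_algebra ring.
From mathcomp Require Import boolp classical_sets.
Set Implicit Arguments. Unset Strict Implicit. Unset Printing Implicit Defensive.
Import GRing.Theory.
Local Open Scope ring_scope.

(* If x is a strong divisor, every r and every power x^n are comparable for
   divisibility, so every element r / x^n of R_x either lies in R or is the
   inverse of an element of R.  Clearing denominators then yields the
   equational criterion of flatness for every intermediate ring, and the
   epimorphism property holds because ring maps preserve inverses.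

   Conversely, let R ⊆ R_x be Prüfer and s = a / x.  Flatness of R ⊆ R[s],
   applied to the relation x * s - a * 1 = 0, shows that either x divides a
   or 1 = P(s) for a polynomial P with coefficients in the maximal ideal m
   (according as some coefficient of the flatness certificate is a unit or
   not).  In the latter case s has an inverse w in R[s], and the same argument
   for w = x / a shows that a divides x unless 1 = Q(w) with Q in m[X].  This
   is excluded by a descent on the least K such that s^K is an m-combination
   of lower powers of s: as s^-1 lies in R[s], such a relation can be divided
   by s while keeping its degree, down to 1 in m.  Once x is comparable with
   every a, any ideal not inside Rx contains some a with x in Ra, hence
   contains Rx. *)

Section Ideals.
Variables (R : comNzRingType) (I : R -> Prop).
Hypothesis I_ideal : is_ideal I.

Lemma ideal0 : I 0. Proof. by case: I_ideal. Qed.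

Lemma idealD a b : I a -> I b -> I (a + b).
Proof. by case: I_ideal => _ + _; apply. Qed.

Lemma idealMl r a : I a -> I (r * a).
Proof. by case: I_ideal => _ _; apply. Qed.

Lemma idealMr r a : I a -> I (a * r).
Proof. by rewrite mulrC; apply: idealMl. Qed.

End Ideals.

Lemma principal_ideal_is_ideal (R : comNzRingType) (t : R) :
  is_ideal (principal_ideal t).
Proof.
split; first by exists 0; rewrite mul0r.
- by move=> _ _ [c ->] [d ->]; exists (c + d); rewrite mulrDl.
- by move=> r _ [c ->]; exists (r * c); rewrite mulrA.
Qed.

Lemma nonunit_in_maximal_ideal (R : comNzRingType) (r : R) :
  ~ (exists v, r * v = 1) -> exists N : R -> Prop, is_maximal_ideal N /\ N r.
Proof.
move=> r_nonunit.
(* The last clause, rather than [I r], gives the empty chain an upper bound. *)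
pose P : set (set R) := fun I =>
  [/\ ~ I 1, (forall a b, I a -> I b -> I (a + b)),
      (forall c a, I a -> I (c * a)) & ((exists a, I a) -> I r)].
have [N [[N1 ND NM Nr] N_max]] : exists N, P N /\ forall J, proper N J -> ~ P J.
  apply: Zorn_bigcup => F FP F_total; split.
  - by move=> [X FX X1]; have [] := FP X FX.
  - move=> a b [X FX Xa] [Y FY Yb].
    have [XY|YX] := F_total X Y FX FY.
      by exists Y => //; have [_ YD _ _] := FP Y FY; apply: YD => //; apply: XY.
    by exists X => //; have [_ XD _ _] := FP X FX; apply: XD => //; apply: YX.
  - by move=> c a [X FX Xa]; exists X => //; have [_ _ XM _] := FP X FX; apply: XM.
  - move=> [a [X FX Xa]]; exists X => //.
    by have [_ _ _ Xr] := FP X FX; apply: Xr; exists a.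
have Pr : P (principal_ideal r).
  have [_ rD rM] := principal_ideal_is_ideal r.
  split=> //; last by exists 1; rewrite mul1r.
  by move=> [c c1]; apply: r_nonunit; exists c; rewrite mulrC -c1.
have N_r : N r.
  apply: Nr; apply: contrapT => N_empty; apply: (N_max _ _ Pr); split.
    by move=> a Na; case: N_empty; exists a.
  by move=> /(_ r) rN; apply: N_empty; exists r; apply: rN; exists 1; rewrite mul1r.
exists N; split=> //; split=> //.
  by split=> //; rewrite -(mul0r r); apply: NM.
move=> J [J0 JD JM] NJ; have [J1|J1] := EM (J 1); [by right | left].
move=> a; split=> [Ja|]; last exact: NJ.
apply: contrapT => Na; apply: (N_max J); first by split=> // /(_ a Ja).
by split=> // _; apply: NJ.
Qed.

Lemma local_ring_nonunit_max (R : comNzRingType) : local_ring R ->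
  exists M : R -> Prop,
    [/\ is_ideal M, ~ M 1 & forall r, ~ M r -> exists v, r * v = 1].
Proof.
move=> [M [[M_ideal M1 _] M_unique]]; exists M; split=> // r Mr.
apply: contrapT => r_nonunit.
have [N [N_max Nr]] := nonunit_in_maximal_ideal r_nonunit.
by apply: Mr; apply/(M_unique N N_max).
Qed.

Lemma strong_divisor_expn_comparable (R : comNzRingType) (x : R) :
  strong_divisor x ->
  forall n r, principal_ideal (x ^+ n) r \/ principal_ideal r (x ^+ n).
Proof.
move=> [_ x_sd]; elim=> [|n IHn] r; first by left; exists r; rewrite mulr1.
have [rRx|/(_ r)] := x_sd _ (principal_ideal_is_ideal r).
  have [c xE] := rRx x (ex_intro _ 1 (esym (mul1r x))).
  by right; exists (x ^+ n * c); rewrite exprSr xE mulrA.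
case=> [|c rE]; first by exists 1; rewrite mul1r.
have [[d cE]|[d xnE]] := IHn c.
  by left; exists d; rewrite rE cE exprSr mulrA.
by right; exists d; rewrite exprSr xnE rE mulrA.
Qed.

Lemma comparable_strong_divisor (R : comNzRingType) (x : R) : regular x ->
  (forall a, principal_ideal x a \/ principal_ideal a x) -> strong_divisor x.
Proof.
move=> x_reg x_cmp; split=> // I [_ _ IM].
have [I_sub|/existsNP[a /not_implyP[Ia xNa]]] :=
  EM (forall a, I a -> principal_ideal x a); first by right.
have [/xNa[]|[c xE]] := x_cmp a; left.
by move=> _ [r ->]; rewrite xE mulrA; apply: IM.
Qed.

Section ImageOrInverse.
Variables (R B : comNzRingType) (phi : {rmorphism R -> B}).

Definition image_or_inverse : Prop :=
  forall b, (exists r, b = phi r) \/ (exists y, phi y * b = 1).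

Lemma localization_image_or_inverse (x : R) : strong_divisor x ->
  is_localization_at_powers phi x -> image_or_inverse.
Proof.
move=> x_sd [_ [e xe] phi_loc] b.
have [r [n bE]] := phi_loc b.
have xen : phi x ^+ n * e ^+ n = 1 by rewrite -exprMn xe expr1n.
have [[c rE]|[c xnE]] := strong_divisor_expn_comparable x_sd n r.
  left; exists c.
  have := congr1 (fun z => z * e ^+ n) bE; rewrite /= -mulrA xen mulr1 => ->.
  by rewrite rE rmorphM rmorphXn -mulrA xen mulr1.
right; exists c.
have := congr1 (fun z => phi c * z * e ^+ n) bE.
by rewrite /= mulrA -mulrA xen mulr1 -rmorphM -xnE rmorphXn xen.
Qed.

Hypothesis phi_val : image_or_inverse.

Lemma image_or_inverse_common_denominator (C : B -> Prop) (s : seq B) :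
  intermediate_ring phi C -> (forall c, c \in s -> C c) ->
  exists Y Z, [/\ C Z, phi Y * Z = 1 &
                  forall c, c \in s -> exists A, c * phi Y = phi A].
Proof.
move=> [CR _ CM]; have C1 : C 1 by rewrite -(rmorph1 phi).
elim: s => [|c s IHs] Cs; first by exists 1, 1; rewrite rmorph1 mulr1.
have [|Y [Z [CZ YZ Y_den]]] := IHs; first by move=> b bs; apply: Cs; rewrite inE bs orbT.
have [y [z [r [Cz yz cy]]]] :
    exists y z r, [/\ C z, phi y * z = 1 & c * phi y = phi r].
  have [[r ->]|[y yc]] := phi_val c.
    by exists 1, 1, r; rewrite rmorph1 !mulr1.
  exists y, c, 1; rewrite rmorph1 (mulrC c) yc; split=> //.
  by apply: Cs; rewrite mem_head.
exists (y * Y), (z * Z); split; first exact: CM.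
  by rewrite rmorphM mulrACA yz YZ mulr1.
move=> b; rewrite inE => /predU1P[->|bs].
  by exists (r * Y); rewrite !rmorphM mulrA cy.
by have [A bA] := Y_den b bs; exists (y * A); rewrite !rmorphM mulrCA bA.
Qed.

Lemma image_or_inverse_flat (C : B -> Prop) : injective phi ->
  intermediate_ring phi C -> flat_on phi C.
Proof.
move=> phi_inj C_ring n a c Cc sum0.
have [|Y [Z [CZ YZ Y_den]]] := image_or_inverse_common_denominator (s := codom c) C_ring.
  by move=> _ /codomP[i ->].
have /choice[A cA] : forall i, exists A, c i * phi Y = phi A.
  by move=> i; apply: Y_den; apply: codom_f.
exists 1%N, (fun _ => Z), (fun i _ => A i); split=> // [i|_].
  by rewrite big_ord1 -cA -mulrA YZ mulr1.
apply: phi_inj; rewrite rmorph0 rmorph_sum.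
transitivity ((\sum_i phi (a i) * c i) * phi Y); last by rewrite sum0 mul0r.
by rewrite mulr_suml; apply: eq_bigr => i _; rewrite rmorphM -cA mulrA.
Qed.

Lemma image_or_inverse_epi (C : B -> Prop) :
  intermediate_ring phi C -> epi_on phi C.
Proof.
move=> [CR _ _] D f g [f1 _ fM] [g1 _ gM] fg c Cc.
have [[r ->]|[y yc]] := phi_val c; first exact: fg.
have fyc : f (phi y) * f c = 1 by rewrite -fM // yc.
have gyc : g (phi y) * g c = 1 by rewrite -gM // yc.
by rewrite -[f c]mulr1 -gyc -fg mulrA (mulrC (f c)) fyc mul1r.
Qed.

Lemma image_or_inverse_prufer : injective phi -> prufer_extension phi.
Proof.
move=> phi_inj C C_ring.
by split; [apply: image_or_inverse_flat | apply: image_or_inverse_epi].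
Qed.

End ImageOrInverse.


Section PruferComparable.
Variables (R B : comNzRingType) (phi : {rmorphism R -> B}) (M : R -> Prop).
Hypotheses (M_ideal : is_ideal M) (M_proper : ~ M 1).
Hypothesis M_nonunit : forall r, ~ M r -> exists v, r * v = 1.

Fact phi_comm (t : B) : commr_rmorph phi t.
Proof. by move=> a; apply: mulrC. Qed.

Local Notation ev t := (horner_morph (phi_comm t)).

Definition adjoin (t b : B) : Prop := exists p, b = ev t p.

Lemma adjoin_intermediate t : intermediate_ring phi (adjoin t).
Proof.
split.
- by move=> r; exists r%:P; rewrite horner_morphC.
- by move=> _ _ [p ->] [q ->]; exists (p - q); rewrite rmorphB.
- by move=> _ _ [p ->] [q ->]; exists (p * q); rewrite rmorphM.
Qed.

Definition polyM (p : {poly R}) : Prop := forall k, M p`_k.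

Lemma polyMD p q : polyM p -> polyM q -> polyM (p + q).
Proof. by move=> Mp Mq k; rewrite coefD; apply: idealD. Qed.

Lemma polyMZ c p : M c -> polyM (c *: p).
Proof. by move=> Mc k; rewrite coefZ; apply: idealMr. Qed.

Lemma polyM_sum (I : Type) (r : seq I) (F : I -> {poly R}) :
  (forall i, polyM (F i)) -> polyM (\sum_(i <- r) F i).
Proof.
move=> MF k; rewrite coef_sum.
by apply: (big_ind M) => [|a b|i _]; [apply: ideal0 | apply: idealD | apply: MF].
Qed.

Lemma unit_oneB m : M m -> exists v, (1 - m) * v = 1.
Proof.
move=> Mm; apply: M_nonunit => M1m; apply: M_proper.
by rewrite -(subrK m 1); apply: idealD.
Qed.

Lemma ev_coef0_drop1 t p : ev t p = phi p`_0 + ev t (drop_poly 1 p) * t.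
Proof.
rewrite -{1}(poly_take_drop 1 p) rmorphD rmorphM rmorphXn /= horner_morphX.
by rewrite [take_poly 1 p]size1_polyC ?size_take_poly // horner_morphC coef_take_poly.
Qed.

Lemma flat_adjoin_cases t r1 r2 : flat_on phi (adjoin t) -> phi r1 * t = phi r2 ->
  principal_ideal r1 r2 \/ exists2 P, polyM P & ev t P = 1.
Proof.
move=> t_flat r1t.
pose a (i : 'I_2) := if val i == 0%N then r1 else - r2.
pose c (i : 'I_2) := if val i == 0%N then t else 1.
have Cc i : adjoin t (c i).
  rewrite /c; case: ifP => _; first by exists 'X; rewrite horner_morphX.
  by exists 1; rewrite rmorph1.
have sum0 : \sum_(i < 2) phi (a i) * c i = 0.
  by rewrite big_ord_recl big_ord1 /= rmorphN mulr1 r1t subrr.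
have [m [b [A [Cb cE AE]]]] := t_flat 2%N a c Cc sum0.
pose i1 : 'I_2 := lift ord0 ord0.
have r1r2 j : r1 * A ord0 j = r2 * A i1 j.
  apply/eqP; rewrite -subr_eq0 -mulNr.
  by move: (AE j); rewrite big_ord_recl big_ord1 /= => ->.
have [[j /M_nonunit[v Av]]|M_A1] := EM (exists j, ~ M (A i1 j)).
  by left; exists (A ord0 j * v); rewrite -[LHS]mulr1 -Av mulrA -r1r2; ring.
have /choice[P PE] := Cb.
have one_sum : 1 = \sum_j phi (A i1 j) * b j := cE i1.
right; exists (\sum_j A i1 j *: P j).
  by apply: polyM_sum => j; apply: polyMZ; apply: contrapT => ?; apply: M_A1; exists j.
by rewrite one_sum linear_sum; apply: eq_bigr => j _; rewrite linearZ /= -PE.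
Qed.

Lemma polyM_eq1_inverse t P : polyM P -> ev t P = 1 -> exists W, t * ev t W = 1.
Proof.
move=> MP Pt1; have [v Pv] := unit_oneB (MP 0%N).
exists (v *: drop_poly 1 P); rewrite linearZ /= mulrCA (mulrC t).
have -> : ev t (drop_poly 1 P) * t = phi (1 - P`_0).
  by rewrite rmorphB rmorph1 -Pt1 (ev_coef0_drop1 t P) addrAC subrr add0r.
by rewrite -rmorphM mulrC Pv rmorph1.
Qed.

Section Descent.
Variable s : B.

Definition power_M_relation (K : nat) : Prop :=
  exists D, [/\ polyM D, (size D <= K)%N & s ^+ K = ev s D].

Lemma power_M_relation_normalize K F :
  polyM F -> (size F <= K.+1)%N -> s ^+ K = ev s F -> power_M_relation K.
Proof.
move=> MF sF sKF.
have F_top : drop_poly K F = (F`_K)%:P.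
  rewrite [LHS]size1_polyC; last by rewrite size_drop_poly leq_subLR addn1.
  by rewrite coef_drop_poly add0n.
have sK_take : s ^+ K * (1 - phi F`_K) = ev s (take_poly K F).
  have F_split : ev s F = ev s (take_poly K F) + phi F`_K * s ^+ K.
    rewrite -{1}(poly_take_drop K F) F_top rmorphD rmorphM rmorphXn /=.
    by rewrite horner_morphC horner_morphX mulrC.
  by rewrite mulrBr mulr1 {1}sKF F_split (mulrC (phi _)) addrK.
have [v Fv] := unit_oneB (MF K).
exists (v *: take_poly K F); split.
- move=> k; rewrite coefZ coef_take_poly.
  by case: ifP => _; [apply: idealMl | rewrite mulr0; apply: ideal0].
- exact: leq_trans (size_scale_leq _ _) (size_take_poly _ _).
- rewrite linearZ /= -sK_take mulrC -mulrA -[X in X - _](rmorph1 phi).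
  by rewrite -rmorphB -rmorphM Fv rmorph1 mulr1.
Qed.

Lemma ev_reduce K (D p : {poly R}) : (size D <= K)%N -> s ^+ K = ev s D ->
  exists2 E : {poly R}, (size E <= K)%N & ev s p = ev s E.
Proof.
move=> sD sKD; pose q := 'X^K - D.
have sq : size q = K.+1 by rewrite size_polyDl size_polyXn // size_polyN ltnS.
have q_monic : q \is monic.
  by rewrite monicE lead_coefDl ?lead_coefXn // size_polyXn size_polyN ltnS.
have q_s : ev s q = 0 by rewrite rmorphB rmorphXn /= horner_morphX sKD subrr.
exists (Pdiv.CommonRing.rmodp p q).
  by rewrite -ltnS -sq Pdiv.CommonRing.ltn_rmodpN0 // monic_neq0.
by rewrite {1}(Pdiv.RingMonic.rdivp_eq q_monic p) rmorphD rmorphM /= q_s mulr0 add0r.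
Qed.

Variables (w : B) (W : {poly R}).
Hypotheses (sw : s * w = 1) (wE : w = ev s W).

Lemma power_M_relation_pred K : power_M_relation K.+1 -> power_M_relation K.
Proof.
move=> [D [MD sD sKD]]; have [E sE WE] := ev_reduce W sD sKD.
have sK : s ^+ K = phi D`_0 * w + ev s (drop_poly 1 D).
  have := congr1 (fun z => z * w) sKD.
  rewrite /= (ev_coef0_drop1 s D) exprSr -mulrA sw mulr1 => ->.
  by rewrite mulrDl -mulrA sw mulr1 addrC.
apply: (@power_M_relation_normalize K (D`_0 *: E + drop_poly 1 D)).
- by apply: polyMD; [apply: polyMZ | move=> k; rewrite coef_drop_poly].
- rewrite (leq_trans (size_polyD _ _)) // geq_max (leq_trans (size_scale_leq _ _)) //=.
  by rewrite size_drop_poly (leq_trans (leq_subr _ _)).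
- by rewrite rmorphD /= linearZ /= -WE -wE sK.
Qed.

Lemma power_M_relation_false K : ~ power_M_relation K.
Proof.
elim: K => [|K IHK] /=; last by move/power_M_relation_pred.
move=> [D [_ + sD1]]; rewrite leqn0 size_poly_eq0 => /eqP D0.
by move: sD1; rewrite D0 rmorph0 expr0 => /eqP; rewrite oner_eq0.
Qed.

(* Multiplying Q(w) = 1 by s^(size Q) reverses Q into an m-relation for s. *)
Lemma polyM_inverse_neq1 Q : polyM Q -> ev w Q <> 1.
Proof.
move=> MQ Qw1; pose K := size Q.
apply: (@power_M_relation_false K).
apply: (@power_M_relation_normalize K (\sum_(k < K) Q`_k *: 'X^(K - k))).
- by apply: polyM_sum => k; apply: polyMZ.
- apply: (big_ind (fun p : {poly R} => (size p <= K.+1)%N)) => [|p1 p2 s1 s2|k _].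
  + by rewrite size_poly0.
  + by rewrite (leq_trans (size_polyD _ _)) // geq_max s1.
  + by rewrite (leq_trans (size_scale_leq _ _)) // size_polyXn ltnS leq_subr.
- rewrite -[LHS]mulr1 -Qw1 -[Q in ev w Q]coefK poly_def !linear_sum mulr_sumr.
  apply: eq_bigr => k _; rewrite !linearZ /= !rmorphXn /= !horner_morphX mulrCA.
  congr (_ * _); have -> : s ^+ K = s ^+ (K - k) * s ^+ k.
    by rewrite -exprD subnK // ltnW.
  by rewrite -mulrA -exprMn sw expr1n mulr1.
Qed.

End Descent.

Lemma flat_adjoin_comparable x e : (forall t, flat_on phi (adjoin t)) ->
  phi x * e = 1 -> forall a, principal_ideal x a \/ principal_ideal a x.
Proof.
move=> adjoin_flat xe a; pose s := phi a * e.
have xs : phi x * s = phi a by rewrite mulrCA xe mulr1.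
have [xa|[P MP Ps1]] := flat_adjoin_cases (adjoin_flat s) xs; first by left.
have [W sW] := polyM_eq1_inverse MP Ps1.
have aw : phi a * ev s W = phi x by rewrite -xs -mulrA sW mulr1.
have [ax|[Q MQ Qw1]] := flat_adjoin_cases (adjoin_flat _) aw; first by right.
by case: (polyM_inverse_neq1 sW erefl MQ Qw1).
Qed.

End PruferComparable.

Theorem mainTheorem7 (R : comNzRingType) (x : R) (B : comNzRingType)
    (phi : {rmorphism R -> B}) :
  local_ring R -> regular x -> is_localization_at_powers phi x ->
  (strong_divisor x <-> prufer_extension phi).
Proof.
move=> R_local x_reg x_loc; have [phi_inj [e xe] _] := x_loc.
split=> [x_sd | phi_prufer].
  by apply: image_or_inverse_prufer phi_inj; apply: localization_image_or_inverse x_sd x_loc.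
have [M [M_ideal M_proper M_nonunit]] := local_ring_nonunit_max R_local.
have adjoin_flat t : flat_on phi (adjoin phi t).
  by have [] := phi_prufer _ (adjoin_intermediate phi t).
exact: comparable_strong_divisor x_reg
  (flat_adjoin_comparable M_ideal M_proper M_nonunit adjoin_flat xe).
Qed.
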